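(* Let $r_2>4$ and let $c$ be an integer with $0<c<\frac{r_2-2}{2}$. Then there is no graph with parameters $(r_2,r_3)$ where $r_3=\binom{r_2-1}{2}+c$.
   Context: All graphs are finite, simple and undirected. The $K_3$-degree of a vertex $v$ is the number of triangles of $G$ containing $v$. A graph $G$ has parameters $(r_2,r_3)$ if every vertex has degree $r_2$ and every vertex has $K_3$-degree $r_3$. *)

From mathcomp Require Import all_boot.
Set Implicit Arguments. Unset Strict Implicit. Unset Printing Implicit Defensive.

Definition simple_graph (T : finType) (e : rel T) : Prop :=
  symmetric e /\ irreflexive e.

Definition nbhd (T : finType) (e : rel T) (v : T) : {set T} := [set y | e v y].
Definition degree (T : finType) (e : rel T) (v : T) : nat := #|nbhd e v|.

Definition is_triangle (T : finType) (e : rel T) (S : {set T}) : bool :=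
  (#|S| == 3) && [forall x in S, forall y in S, (x != y) ==> e x y].

Definition k3_degree (T : finType) (e : rel T) (v : T) : nat :=
  #|[set S : {set T} | is_triangle e S & v \in S]|.

Definition has_params (T : finType) (e : rel T) (r2 r3 : nat) : Prop :=
  forall v : T, degree e v = r2 /\ k3_degree e v = r3.

From mathcomp Require Import all_boot zify.
Set Implicit Arguments. Unset Strict Implicit. Unset Printing Implicit Defensive.

(* Write r = r2 and k = r3 = 'C(r - 1, 2) + c.  Counting ordered pairs of
   adjacent neighbours of v gives sum_(x ~ v) |N(x) :&: N(v)| = 2k
   = (r - 1)(r - 2) + 2c < r(r - 2), so some edge uv has codegree L <= r - 3.
   Every triangle at u or at v either has a vertex in N(u) :&: N(v), and there
   are at most r L such incidences, or lies inside N(u) :\: N(v) or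
   N(v) :\: N(u); these sets have r - L vertices, one of which (v, resp. u) is
   isolated in them.  Hence 2k <= r L + (r - L - 1)(r - L - 2), which is less
   than (r - 1)(r - 2) + 2c as soon as c > 0. *)

Lemma sum_nat_bool (I : finType) (A : {set I}) (P : pred I) :
  \sum_(i in A) P i = #|[set i in A | P i]|.
Proof.
rewrite -sum1_card [RHS]big_mkcond [LHS]big_mkcond /=.
by apply: eq_bigr => i _; rewrite !inE; case: (i \in A); case: (P i).
Qed.

Section EdgeCounting.

Variables (T : finType) (e : rel T).
Hypotheses (e_sym : symmetric e) (e_irr : irreflexive e).
Implicit Types A B C : {set T}.

Definition nedges A B : nat := \sum_(x in A) \sum_(y in B) e x y.

Definition codegree x y : nat := #|nbhd e x :&: nbhd e y|.

Lemma in_nbhd x y : (y \in nbhd e x) = e x y.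
Proof. by rewrite inE. Qed.

Lemma adj_neq x y : e x y -> x != y.
Proof. by apply: contraTneq => ->; rewrite e_irr. Qed.

Lemma sum_adj x B : \sum_(y in B) e x y = #|nbhd e x :&: B|.
Proof. by rewrite sum_nat_bool; apply: eq_card => y; rewrite !inE andbC. Qed.

Lemma nedgesE A B : nedges A B = \sum_(x in A) #|nbhd e x :&: B|.
Proof. by apply: eq_bigr => x _; rewrite sum_adj. Qed.

Lemma nedgesC A B : nedges A B = nedges B A.
Proof.
rewrite /nedges exchange_big /=.
by apply: eq_bigr => y _; apply: eq_bigr => x _; rewrite e_sym.
Qed.

Lemma nedgesIDl C A B : nedges A B = nedges (A :&: C) B + nedges (A :\: C) B.
Proof. exact: big_setID. Qed.

Lemma nedgesIDr C A B : nedges A B = nedges A (B :&: C) + nedges A (B :\: C).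
Proof. by rewrite nedgesC (nedgesIDl C) !(nedgesC A). Qed.

Lemma leq_nedgesr A B C : B \subset C -> nedges A B <= nedges A C.
Proof.
move=> sBC; rewrite !nedgesE; apply: leq_sum => x _.
by apply: subset_leq_card; apply: setIS.
Qed.

Lemma nedges_setT A : nedges A setT = \sum_(x in A) degree e x.
Proof. by rewrite nedgesE; apply: eq_bigr => x _; rewrite setIT. Qed.

Lemma nedges_self_le A : nedges A A <= #|A| * (#|A| - 1).
Proof.
rewrite nedgesE -sum_nat_const; apply: leq_sum => x xA.
rewrite (cardsD1 x A) xA add1n subn1 /=; apply: subset_leq_card.
apply/subsetP => y; rewrite !inE => /andP[exy ->].
by rewrite andbT eq_sym adj_neq.
Qed.

Lemma nedges_isolated_le A u :
  u \in A -> nbhd e u :&: A = set0 -> nedges A A <= (#|A| - 1) * (#|A| - 2).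
Proof.
move=> uA uA0.
have drop_u B : B \subset A -> nedges A B = nedges (A :\ u) B.
  move=> sBA; rewrite (nedgesIDl [set u]) (setIidPr _) ?sub1set // nedgesE big_set1.
  rewrite -[RHS]add0n; congr (_ + _); apply/eqP; rewrite cards_eq0 -subset0 -uA0.
  exact: setIS.
rewrite drop_u // nedgesC drop_u ?subsetDl //.
by rewrite (cardsD1 u A) uA add1n subSS subn0 subSS nedges_self_le.
Qed.

Lemma triangle_adj S x y :
  is_triangle e S -> x \in S -> y \in S -> x != y -> e x y.
Proof.
by case/andP=> _ /'forall_in_forall_inP adjS xS yS /(implyP (adjS x xS y yS)).
Qed.

Lemma triangle3 x y z : e x y -> e x z -> e y z -> is_triangle e [set x; y; z].
Proof.
move=> exy exz eyz; apply/andP; split.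
  by rewrite setUC cardsU1 cards2 !inE negb_or !(eq_sym z) !adj_neq.
apply/'forall_in_forall_inP => a + b; rewrite !inE.
by do 2!case/orP=> [/orP[]|] /eqP->;
  rewrite ?eqxx ?(e_sym y x) ?(e_sym z x) ?(e_sym z y) ?exy ?exz ?eyz ?implybT.
Qed.

Lemma triangle_nbhdI S w : is_triangle e S -> w \in S -> nbhd e w :&: S = S :\ w.
Proof.
move=> tS wS; apply/setP => x; rewrite !inE; case xS: (x \in S); rewrite ?andbT ?andbF //.
apply/idP/idP => [/adj_neq|xw]; first by rewrite eq_sym.
by apply: triangle_adj tS wS xS _; rewrite eq_sym.
Qed.

Lemma triangles_through_edge w x : e w x ->
  [set S | is_triangle e S & (w \in S) && (x \in S)] =
  [set [set w; x; y] | y in nbhd e w :&: nbhd e x].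
Proof.
move=> ewx; apply/setP => S; rewrite inE; apply/andP/imsetP => [[tS /andP[wS xS]]|].
  have : #|S :\ w :\ x| == 1.
    move: (tS) => /andP[/eqP + _]; rewrite (cardsD1 w) (cardsD1 x (S :\ w)) wS.
    by rewrite !inE xS (eq_sym x) adj_neq //= !add1n => -[->].
  case/cards1P=> y Sy; have : y \in S :\ w :\ x by rewrite Sy set11.
  rewrite !inE => /and3P[yx yw yS]; exists y.
    by rewrite !inE !(triangle_adj tS) // eq_sym.
  apply/setP => z; rewrite !inE; have /setP/(_ z) := Sy; rewrite !inE.
  by case: eqP => [->|]; case: eqP => [->|] //= _ _ ->.
case=> y; rewrite !inE => /andP[ewy exy] ->.
by rewrite triangle3 // !inE !eqxx orbT.
Qed.

Lemma card_triangles_through_edge w x : e w x ->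
  #|[set S | is_triangle e S & (w \in S) && (x \in S)]| = #|nbhd e w :&: nbhd e x|.
Proof.
move=> ewx; rewrite triangles_through_edge // card_in_imset // => y y'.
rewrite !inE => /andP[ewy exy] _ Ey; have : y \in [set w; x; y'] by rewrite -Ey !inE eqxx orbT.
by rewrite !inE => /orP[/orP[]|] /eqP // yE; rewrite yE e_irr in ewy exy.
Qed.

Lemma nedges_nbhd w : nedges (nbhd e w) (nbhd e w) = 2 * k3_degree e w.
Proof.
set Tw := [set S | is_triangle e S & w \in S].
have codegreeE x : x \in nbhd e w -> #|nbhd e x :&: nbhd e w| = \sum_(S in Tw) (x \in S).
  rewrite in_nbhd setIC => ewx; rewrite sum_nat_bool -card_triangles_through_edge //.
  by apply: eq_card => S; rewrite !inE andbA.
rewrite nedgesE (eq_bigr _ codegreeE) exchange_big mulnC -sum_nat_const /=.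
apply: eq_bigr => S; rewrite inE => /andP[tS wS]; rewrite sum_nat_bool.
have -> : [set x in nbhd e w | x \in S] = S :\ w.
  by rewrite -(triangle_nbhdI tS wS); apply/setP => x; rewrite !inE.
by move: tS => /andP[/eqP]; rewrite (cardsD1 w) wS add1n => -[].
Qed.

Lemma twice_k3_degree_split a b :
  2 * k3_degree e a =
  nedges (nbhd e a :&: nbhd e b) (nbhd e a)
  + nedges (nbhd e a :&: nbhd e b) (nbhd e a :\: nbhd e b)
  + nedges (nbhd e a :\: nbhd e b) (nbhd e a :\: nbhd e b).
Proof.
rewrite -nedges_nbhd (nedgesIDl (nbhd e b)) (nedgesIDr (nbhd e b) (_ :\: _)).
by rewrite (nedgesC (_ :\: _) (_ :&: _)) addnA.
Qed.

Section Regular.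

Variable r : nat.
Hypothesis e_reg : forall x, degree e x = r.

Lemma nedges_disjoint_le A B C :
  [disjoint B & C] -> nedges A B + nedges A C <= #|A| * r.
Proof.
move=> dBC; have -> : #|A| * r = nedges A setT.
  by rewrite nedges_setT -sum_nat_const; apply: eq_bigr => x _; rewrite e_reg.
rewrite [nedges A setT](nedgesIDr B) setTI leq_add2l leq_nedgesr // setTD.
by rewrite -disjoints_subset disjoint_sym.
Qed.

Lemma nedges_nbhdD_le a b : e a b ->
  nedges (nbhd e a :\: nbhd e b) (nbhd e a :\: nbhd e b)
  <= (r - codegree a b - 1) * (r - codegree a b - 2).
Proof.
move=> eab; have <- : #|nbhd e a :\: nbhd e b| = r - codegree a b.
  by rewrite -(e_reg a) /degree -(cardsID (nbhd e b) (nbhd e a)) addKn.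
apply: (nedges_isolated_le (u := b)); first by rewrite !inE eab e_irr.
by apply/setP => x; rewrite !inE; case: (e b x).
Qed.

Lemma exists_low_codegree v :
  2 * k3_degree e v < r * (r - 2) -> exists2 u, e u v & codegree u v + 2 < r.
Proof.
move=> k3_small.
have [/exists_inP[u]|] := boolP [exists u in nbhd e v, codegree u v + 2 < r].
  by rewrite in_nbhd e_sym; exists u.
rewrite negb_exists_in => /forall_inP high; move: k3_small; rewrite ltnNge => /negP[].
have -> : r * (r - 2) = \sum_(x in nbhd e v) (r - 2).
  by rewrite sum_nat_const -/(degree e v) e_reg.
rewrite -nedges_nbhd nedgesE; apply: leq_sum => x xv.
by rewrite leq_subLR addnC leqNgt; apply: high.
Qed.

Lemma k3_degree_edge_le u v : e u v ->
  k3_degree e u + k3_degree e v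
  <= r * codegree u v + (r - codegree u v - 1) * (r - codegree u v - 2).
Proof.
move=> euv; have evu : e v u by rewrite e_sym.
have disjD a b : [disjoint nbhd e a & nbhd e b :\: nbhd e a].
  by rewrite disjoint_sym disjoints_subset setDE subsetIr.
have := nedges_disjoint_le (nbhd e u :&: nbhd e v) (disjD u v).
have := nedges_disjoint_le (nbhd e u :&: nbhd e v) (disjD v u).
have := nedges_nbhdD_le euv; have := nedges_nbhdD_le evu.
have := twice_k3_degree_split u v; have := twice_k3_degree_split v u.
rewrite /codegree (setIC (nbhd e v)); lia.
Qed.

End Regular.

End EdgeCounting.

Lemma codegree_bound_lt r L c : 0 < c -> L + 2 < r ->
  r * L + (r - L - 1) * (r - L - 2) < (r - 1) * (r - 2) + 2 * c.
Proof.
move=> c_gt0 L_small; have [d ->] : exists d, r = L + d + 3 by exists (r - L - 3); lia.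
have -> : L + d + 3 - L - 1 = d + 2 by lia.
have -> : L + d + 3 - L - 2 = d + 1 by lia.
have -> : L + d + 3 - 1 = L + d + 2 by lia.
have -> : L + d + 3 - 2 = L + d + 1 by lia.
nia.
Qed.

Theorem proposition3p5 (r2 c : nat) :
  4 < r2 -> 0 < c -> 2 * c < r2 - 2 ->
  ~ exists (T : finType) (e : rel T),
      0 < #|T| /\ simple_graph e /\ has_params e r2 ('C(r2 - 1, 2) + c).
Proof.
(* [4 < r2] is implied by the other two hypotheses. *)
move=> _ c_gt0 c_small [T [e [/card_gt0P[v _] [[e_sym e_irr] params]]]].
have e_reg x : degree e x = r2 := (params x).1.
have k3E x : k3_degree e x = 'C(r2 - 1, 2) + c := (params x).2.
have twice_bin : 2 * 'C(r2 - 1, 2) = (r2 - 1) * (r2 - 2).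
  by rewrite -mul_bin_diag bin1 -subn1 -subnDA.
have [|u euv low] := exists_low_codegree e_sym e_irr e_reg (v := v).
  rewrite k3E mulnDr twice_bin; nia.
have := k3_degree_edge_le e_sym e_irr e_reg euv; rewrite !k3E.
have := codegree_bound_lt c_gt0 low; rewrite -twice_bin; lia.
Qed.
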